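(* Let $S=\{1,2\}$ and $N=\{1,\ldots,n\}$, and identify each belief with the probability it assigns to state $1$. Given individual beliefs $p_1,\ldots,p_n\in[0,1]$, the parimutuel equilibrium price (identified with the price/probability of state 1) of the parimutuel market with equal wealth is \[\mathrm{med}\Big(p_1,\ldots,p_n,\tfrac{1}{n},\tfrac{2}{n},\ldots,\tfrac{n-1}{n}\Big).\]
   Context: For an odd number $m$ of reals $x_1,\ldots,x_m$, $\mathrm{med}(x_1,\ldots,x_m)$ is the value $x^*$ among them with $|\{i:x_i<x^*\}|\le\frac{m-1}{2}$ and $|\{i:x_i>x^*\}|\le\frac{m-1}{2}$. The parimutuel market has consumers $i\in N$, each with consumption set $\mathbb{R}^S_+$ and linear utility $x\mapsto p_i\cdot x$ (where $p_i$ is identified with the vector $(p_i,1-p_i)$). A parimutuel equilibrium with equal wealth is a pair $(\rho,\mathbf{x})$ with $\rho\in\Delta(S)$ and $\mathbf{x}=(x_1,\ldots,x_n)\in(\mathbb{R}^S_+)^N$ such that (1) for each $i$, $\rho\cdot x_i\le 1/n$ and $p_i\cdot x_i\ge p_i\cdot y$ for every $y\in\mathbb{R}^S_+$ with $\rho\cdot y\le 1/n$; and (2) $\sum_i x_i=(1,1)$. The parimutuel price is the $\rho$ of such an equilibrium. *)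

(* Goods/states S = {1,2}; a bundle in R^S is a pair (state1, state2). *)
From HB Require Import structures.
From mathcomp Require Import all_boot all_order all_algebra.
Set Implicit Arguments. Unset Strict Implicit. Unset Printing Implicit Defensive.
Import Order.TTheory GRing.Theory Num.Theory.
Local Open Scope ring_scope.

Definition dot {R : realFieldType} (a b : R * R) : R := a.1 * b.1 + a.2 * b.2.

Definition belief {R : realFieldType} (p : R) : R * R := (p, 1 - p).

Definition in_simplex {R : realFieldType} (rho : R * R) : Prop :=
  0 <= rho.1 /\ 0 <= rho.2 /\ rho.1 + rho.2 = 1.

Definition nonneg2 {R : realFieldType} (y : R * R) : Prop := 0 <= y.1 /\ 0 <= y.2.

Definition parimutuel_eq {R : realFieldType} (n : nat) (p : 'I_n -> R)
    (rho : R * R) (x : 'I_n -> R * R) : Prop :=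
  in_simplex rho /\
  (forall i : 'I_n,
      nonneg2 (x i) /\
      dot rho (x i) <= n%:R^-1 /\
      (forall y : R * R, nonneg2 y -> dot rho y <= n%:R^-1 ->
         dot (belief (p i)) y <= dot (belief (p i)) (x i))) /\
  (\sum_(i < n) (x i).1 = 1 /\ \sum_(i < n) (x i).2 = 1).

Definition is_med {R : realFieldType} (s : seq R) (m : R) : Prop :=
  m \in s /\
  (count (fun y : R => (y < m)%R) s <= (size s).-1./2)%N /\
  (count (fun y : R => (m < y)%R) s <= (size s).-1./2)%N.

Definition med_list {R : realFieldType} (n : nat) (p : 'I_n -> R) : seq R :=
  [seq p i | i <- enum 'I_n] ++ [seq k%:R / n%:R | k <- iota 1 n.-1].

From HB Require Import structures.
From mathcomp Require Import all_boot all_order all_algebra.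
From mathcomp Require Import ring lra zify.
Import Order.TTheory GRing.Theory Num.Theory.
Local Open Scope ring_scope.

(* At prices (r, 1 - r), a trader with belief p_i > r spends her whole budget
   1/n on state 1, one with p_i < r spends it on state 2, and one with p_i = r
   is indifferent. Clearing the two markets is therefore possible exactly when
   r is balanced: #{i | p_i > r} <= n r and #{i | p_i < r} <= n (1 - r), the
   indifferent traders absorbing what is left of the supply. The least r among
   the beliefs and the multiples of 1/n satisfying the first inequality also
   satisfies the second, so a balanced price exists. Finally the two
   inequalities say that at most n - 1 entries of p_1, ..., p_n, 1/n, ...,
   (n-1)/n lie strictly below r, resp. strictly above r, and a balanced r
   equals some p_i or, if there is no tie, the grid point #{i | p_i > r} / n.
   So r is the median of that list. *)

Section Demand.
Context {R : realFieldType}.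
Implicit Types (r q w : R) (x y : R * R).

Definition is_demand (rho : R * R) w q x : Prop :=
  nonneg2 x /\ dot rho x <= w /\
  (forall y, nonneg2 y -> dot rho y <= w -> dot (belief q) y <= dot (belief q) x).

Lemma value_le_cost_state1 {r q y} : r <= q -> nonneg2 y ->
  r * dot (belief q) y <= q * dot (r, 1 - r) y.
Proof. by case: y => y1 y2 rq [/= _ y2n]; rewrite /dot /=; nra. Qed.

Lemma value_le_cost_state2 {r q y} : q <= r -> nonneg2 y ->
  (1 - r) * dot (belief q) y <= (1 - q) * dot (r, 1 - r) y.
Proof. by case: y => y1 y2 qr [/= y1n _]; rewrite /dot /=; nra. Qed.

Lemma demand_all_state1 r w q : 0 < r -> r <= q -> 0 <= w ->
  is_demand (r, 1 - r) w q (w / r, 0).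
Proof.
move=> r_gt0 rq w_ge0; split; [|split].
- by split; rewrite //= divr_ge0 // ltW.
- by rewrite /dot /= mulr0 addr0 mulrC divfK ?gt_eqF.
move=> y y_ge0 y_cost.
have -> : dot (belief q) (w / r, 0) = q * w / r by rewrite /dot /= mulr0 addr0 mulrA.
rewrite ler_pdivlMr // mulrC.
by apply: le_trans (value_le_cost_state1 rq y_ge0) _; rewrite ler_wpM2l //; lra.
Qed.

Lemma demand_all_state2 r w q : r < 1 -> q <= r -> 0 <= w ->
  is_demand (r, 1 - r) w q (0, w / (1 - r)).
Proof.
move=> r_lt1 qr w_ge0; have r'_gt0 : 0 < 1 - r by lra.
split; [|split].
- by split; rewrite //= divr_ge0 // ltW.
- by rewrite /dot /= mulr0 add0r mulrC divfK ?gt_eqF.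
move=> y y_ge0 y_cost.
have -> : dot (belief q) (0, w / (1 - r)) = (1 - q) * w / (1 - r).
  by rewrite /dot /= mulr0 add0r mulrA.
rewrite ler_pdivlMr // mulrC.
by apply: le_trans (value_le_cost_state2 qr y_ge0) _; rewrite ler_wpM2l //; lra.
Qed.

Lemma demand_tie r w x : nonneg2 x -> dot (r, 1 - r) x = w ->
  is_demand (r, 1 - r) w r x.
Proof.
move=> x_ge0 x_cost; split=> //; split=> [|y _ y_cost]; first by rewrite x_cost.
by rewrite /belief x_cost.
Qed.

Lemma demand_no_state2 {r w q x} : r <= 1 -> r < q ->
  is_demand (r, 1 - r) w q x -> x.2 = 0.
Proof.
case: x => x1 x2 r_le1 rq [[/= x1_ge0 x2_ge0] [x_cost x_opt]].
(* Trade the state-2 claims for state-1 claims at the same cost. *)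
pose y := (x1 + (1 - r) * x2, (1 - r) * x2).
have y_ge0 : nonneg2 y by split; rewrite /=; nra.
have y_cost : dot (r, 1 - r) y = dot (r, 1 - r) (x1, x2) by rewrite /dot /=; ring.
have := x_opt y y_ge0; rewrite y_cost => /(_ x_cost); rewrite /dot /= => opt.
by apply/eqP; rewrite eq_le x2_ge0 andbT; nra.
Qed.

Lemma demand_no_state1 {r w q x} : 0 <= r -> q < r ->
  is_demand (r, 1 - r) w q x -> x.1 = 0.
Proof.
case: x => x1 x2 r_ge0 qr [[/= x1_ge0 x2_ge0] [x_cost x_opt]].
pose y := (r * x1, x2 + r * x1).
have y_ge0 : nonneg2 y by split; rewrite /=; nra.
have y_cost : dot (r, 1 - r) y = dot (r, 1 - r) (x1, x2) by rewrite /dot /=; ring.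
have := x_opt y y_ge0; rewrite y_cost => /(_ x_cost); rewrite /dot /= => opt.
by apply/eqP; rewrite eq_le x1_ge0 andbT; nra.
Qed.

End Demand.

Lemma count_iota_le (P : pred nat) a l b m :
  (forall k, k \in iota a l -> P k -> (b <= k < b + m)%N) ->
  (count P (iota a l) <= m)%N.
Proof.
move=> P_in; rewrite -size_filter -[m in (_ <= m)%N](size_iota b).
apply: uniq_leq_size; first by rewrite filter_uniq ?iota_uniq.
by move=> k; rewrite mem_filter => /andP[Pk kI]; rewrite mem_iota; exact: P_in kI Pk.
Qed.

Section Parimutuel.
Context {R : realFieldType} {n : nat} {p : 'I_n -> R}.
Hypothesis n_gt0 : (0 < n)%N.
Hypothesis p01 : forall i, 0 <= p i <= 1.
Implicit Types (r s : R).

Definition n_above r := count (fun i => r < p i) (enum 'I_n).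
Definition n_below r := count (fun i => p i < r) (enum 'I_n).
Definition n_at r := count (fun i => p i == r) (enum 'I_n).

Definition balanced r : Prop :=
  [/\ 0 <= r <= 1, (n_above r)%:R <= n%:R * r & (n_below r)%:R <= n%:R * (1 - r)].

Lemma n_above_below_at r : (n_above r + n_below r + n_at r = n)%N.
Proof.
rewrite /n_above /n_below /n_at -[RHS](size_enum_ord n).
by elim: (enum 'I_n) => //= i s <-; case: ltgtP => _; lia.
Qed.

Lemma count_ord_predC (P : pred 'I_n) :
  count (predC P) (enum 'I_n) = (n - count P (enum 'I_n))%N.
Proof.
by rewrite -(addKn (count P (enum 'I_n)) (count _ _)) count_predC size_enum_ord.
Qed.

Lemma sum_ord_cond_const (P : pred 'I_n) (c : R) :
  \sum_(i < n | P i) c = c *+ count P (enum 'I_n).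
Proof. by rewrite big_const_seq iter_addr_0 enumT. Qed.

Lemma n_above_le r : (n_above r <= n)%N.
Proof. by rewrite -[n in (_ <= n)%N](size_enum_ord n) count_size. Qed.

Lemma n_below_le r : (n_below r <= n)%N.
Proof. by rewrite -[n in (_ <= n)%N](size_enum_ord n) count_size. Qed.

Lemma count_enum_gt0 (P : pred 'I_n) i : P i -> (0 < count P (enum 'I_n))%N.
Proof. by move=> Pi; rewrite -has_count; apply/hasP; exists i; rewrite ?mem_enum. Qed.

Lemma lt1_of_above r : (0 < n_above r)%N -> r < 1.
Proof.
rewrite -has_count => /hasP[i _ r_lt]; have /andP[_ p_le1] := p01 i.
exact: lt_le_trans p_le1.
Qed.

Lemma gt0_of_below r : (0 < n_below r)%N -> 0 < r.
Proof.
rewrite -has_count => /hasP[i _ lt_r]; have /andP[p_ge0 _] := p01 i.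
exact: le_lt_trans lt_r.
Qed.

Lemma n_above1 : n_above 1 = 0%N.
Proof.
apply/eqP; rewrite -leqn0 leqNgt -has_count; apply/hasPn => i _.
by rewrite -leNgt; case/andP: (p01 i).
Qed.

Lemma parimutuel_eq_price {r s x} : parimutuel_eq p (r, s) x -> s = 1 - r.
Proof. by move=> [[_ [_ /= rs1]] _]; lra. Qed.

Lemma parimutuel_eq_above {r x} : parimutuel_eq p (r, 1 - r) x ->
  (n_above r)%:R <= n%:R * r.
Proof.
move=> [[/= r_ge0 [r'_ge0 _]] [dem [_ clear2]]].
have r_le1 : r <= 1 by lra.
have spend_le : \sum_(i < n) (1 - r) * (x i).2 <= n%:R^-1 *+ (n - n_above r).
  rewrite -count_ord_predC -sum_ord_cond_const (bigID (fun i => r < p i)) /=.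
  rewrite big1 ?add0r => [|i r_lt]; last first.
    by rewrite (demand_no_state2 r_le1 r_lt (dem i)) mulr0.
  apply: ler_sum => i _; have [[x1_ge0 _] [x_cost _]] := dem i.
  by apply: le_trans _ x_cost; rewrite /dot /= lerDr mulr_ge0.
move: spend_le; rewrite -mulr_sumr clear2 mulr1.
rewrite -[X in _ <= X]mulr_natl ler_pdivlMr ?ltr0n // natrB ?n_above_le //.
lra.
Qed.

Lemma parimutuel_eq_below {r x} : parimutuel_eq p (r, 1 - r) x ->
  (n_below r)%:R <= n%:R * (1 - r).
Proof.
move=> [[/= r_ge0 [r'_ge0 _]] [dem [clear1 _]]].
have spend_le : \sum_(i < n) r * (x i).1 <= n%:R^-1 *+ (n - n_below r).
  rewrite -count_ord_predC -sum_ord_cond_const (bigID (fun i => p i < r)) /=.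
  rewrite big1 ?add0r => [|i lt_r]; last first.
    by rewrite (demand_no_state1 r_ge0 lt_r (dem i)) mulr0.
  apply: ler_sum => i _; have [[_ x2_ge0] [x_cost _]] := dem i.
  by apply: le_trans _ x_cost; rewrite /dot /= lerDl mulr_ge0.
move: spend_le; rewrite -mulr_sumr clear1 mulr1.
rewrite -[X in _ <= X]mulr_natl ler_pdivlMr ?ltr0n // natrB ?n_below_le //.
lra.
Qed.

Lemma parimutuel_eq_balanced {rho x} : parimutuel_eq p rho x -> balanced rho.1.
Proof.
case: rho => r s eq_rho; have s_E := parimutuel_eq_price eq_rho.
rewrite {}s_E in eq_rho.
have [[/= r_ge0 [r'_ge0 _]] _] := eq_rho.
split.
- by apply/andP; split; lra.
- exact: parimutuel_eq_above eq_rho.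
- exact: parimutuel_eq_below eq_rho.
Qed.

Lemma balanced_n_above_lt {r} : balanced r -> (n_above r < n)%N.
Proof.
case=> _ above _; rewrite ltnNge; apply/negP => n_le.
have /lt1_of_above r_lt1 : (0 < n_above r)%N by lia.
have n_pos : 0 < n%:R :> R by rewrite ltr0n.
have : n%:R <= n%:R * r :> R by apply: le_trans above; rewrite ler_nat.
nra.
Qed.

Lemma balanced_n_below_lt {r} : balanced r -> (n_below r < n)%N.
Proof.
case=> _ _ below; rewrite ltnNge; apply/negP => n_le.
have /gt0_of_below r_gt0 : (0 < n_below r)%N by lia.
have n_pos : 0 < n%:R :> R by rewrite ltr0n.
have : n%:R <= n%:R * (1 - r) :> R by apply: le_trans below; rewrite ler_nat.
nra.
Qed.

Lemma balanced_gt0_of_above {r} : balanced r -> (0 < n_above r)%N -> 0 < r.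
Proof.
case=> _ above _ A_gt0; have : 1 <= (n_above r)%:R :> R by rewrite ler1n.
have : 0 < n%:R :> R by rewrite ltr0n.
nra.
Qed.

Lemma balanced_lt1_of_below {r} : balanced r -> (0 < n_below r)%N -> r < 1.
Proof.
case=> _ _ below B_gt0; have : 1 <= (n_below r)%:R :> R by rewrite ler1n.
have : 0 < n%:R :> R by rewrite ltr0n.
nra.
Qed.

Lemma balanced_tie_free {r} : balanced r -> n_at r = 0%N ->
  (n_above r)%:R = n%:R * r.
Proof.
case=> _ above below n_at0.
have : (n_above r)%:R + (n_below r)%:R = n%:R :> R.
  by rewrite -natrD -(n_above_below_at r) n_at0 addn0.
lra.
Qed.

Lemma balanced_mem_med_list {r} : balanced r -> r \in med_list p.
Proof.
move=> bal; rewrite mem_cat.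
have [/hasP[i _ /eqP <-]|no_tie] := boolP (has (fun i => p i == r) (enum 'I_n)).
  by rewrite map_f ?mem_enum.
have n_at0 : n_at r = 0%N by apply/eqP; rewrite -leqn0 leqNgt -has_count.
have A_lt := balanced_n_above_lt bal; have B_lt := balanced_n_below_lt bal.
have := n_above_below_at r; rewrite n_at0 addn0 => ABn.
apply/orP; right; apply/mapP; exists (n_above r); first by rewrite mem_iota; lia.
by rewrite (balanced_tie_free bal n_at0) mulrAC divff ?mul1r // pnatr_eq0 -lt0n.
Qed.

Lemma count_med_list (P : pred R) :
  count P (med_list p) = (count (fun i => P (p i)) (enum 'I_n) +
                          count (fun k => P (k%:R / n%:R)) (iota 1 n.-1))%N.
Proof. by rewrite count_cat !count_map. Qed.

Lemma balanced_count_lt {r} : balanced r ->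
  (count (fun y => (y < r)%R) (med_list p) <= n.-1)%N.
Proof.
move=> bal; have [_ _ below] := bal; have B_lt := balanced_n_below_lt bal.
rewrite count_med_list -/(n_below r).
set grid_lt := count _ (iota _ _).
suff : (grid_lt <= (n - n_below r).-1)%N by lia.
apply: (@count_iota_le _ 1 n.-1 1) => k.
rewrite mem_iota => /andP[k_ge1 _] k_lt.
suff : (k < n - n_below r)%N by lia.
rewrite ltr_pdivrMr ?ltr0n // in k_lt.
by rewrite -(ltr_nat R) natrB ?n_below_le //; lra.
Qed.

Lemma balanced_count_gt {r} : balanced r ->
  (count (fun y => (r < y)%R) (med_list p) <= n.-1)%N.
Proof.
move=> bal; have [_ above _] := bal; have A_lt := balanced_n_above_lt bal.
rewrite count_med_list -/(n_above r).
set grid_gt := count _ (iota _ _).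
suff : (grid_gt <= n.-1 - n_above r)%N by lia.
apply: (@count_iota_le _ 1 n.-1 (n_above r).+1) => k.
rewrite mem_iota => /andP[_ k_lt] lt_k.
suff : (n_above r < k)%N by lia.
rewrite ltr_pdivlMr ?ltr0n // in lt_k.
by rewrite -(ltr_nat R); lra.
Qed.

Lemma balanced_is_med {r} : balanced r -> is_med (med_list p) r.
Proof.
move=> bal; have half_size : (size (med_list p)).-1./2 = n.-1.
  rewrite size_cat !size_map -enumT size_enum_ord size_iota.
  by case: n n_gt0 => // m _; rewrite /= addnn doubleK.
split; last split; rewrite ?half_size.
- exact: balanced_mem_med_list.
- exact: balanced_count_lt.
- exact: balanced_count_gt.
Qed.

Definition by_position {T} r (a b c : T) i : T :=
  if r < p i then a else if p i < r then b else c.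

Lemma sum_by_position r (a b c : R) :
  \sum_(i < n) by_position r a b c i = a *+ n_above r + b *+ n_below r + c *+ n_at r.
Proof.
rewrite [LHS](_ : _ = \sum_(i <- enum 'I_n) by_position r a b c i); last first.
  by rewrite enumT.
rewrite /n_above /n_below /n_at; elim: (enum 'I_n) => [|i s IH].
  by rewrite big_nil !mulr0n !addr0.
rewrite big_cons IH /by_position /=; case: ltgtP => _ /=; rewrite !mulrS; ring.
Qed.

Definition above_demand r : R := (n%:R^-1 / r) *+ n_above r.
Definition below_demand r : R := (n%:R^-1 / (1 - r)) *+ n_below r.

(* The indifferent traders share the remaining supply equally; when there is
   no one to share it, [n_at r = 0] and the division is junk but unused. *)
Definition tie_bundle r : R * R :=
  ((1 - above_demand r) / (n_at r)%:R, (1 - below_demand r) / (n_at r)%:R).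

Definition balanced_alloc r i : R * R :=
  (by_position r (n%:R^-1 / r) 0 (tie_bundle r).1 i,
   by_position r 0 (n%:R^-1 / (1 - r)) (tie_bundle r).2 i).

Lemma balanced_above_demand {r} : balanced r ->
  r * above_demand r = (n_above r)%:R / n%:R /\ above_demand r <= 1.
Proof.
move=> bal; have [_ above _] := bal; have n_pos : 0 < n%:R :> R by rewrite ltr0n.
rewrite /above_demand -mulr_natr.
have [-> | /(balanced_gt0_of_above bal) r_gt0] := posnP (n_above r).
  by rewrite !mulr0 mul0r.
have -> : n%:R^-1 / r * (n_above r)%:R = (n_above r)%:R / n%:R / r.
  by field; rewrite !gt_eqF.
split; first by rewrite mulrC divfK ?gt_eqF.
by rewrite !ler_pdivrMr // mul1r mulrC.
Qed.

Lemma balanced_below_demand {r} : balanced r ->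
  (1 - r) * below_demand r = (n_below r)%:R / n%:R /\ below_demand r <= 1.
Proof.
move=> bal; have [_ _ below] := bal; have n_pos : 0 < n%:R :> R by rewrite ltr0n.
rewrite /below_demand -mulr_natr.
have [-> | /(balanced_lt1_of_below bal) r_lt1] := posnP (n_below r).
  by rewrite !mulr0 mul0r.
have r'_gt0 : 0 < 1 - r by rewrite subr_gt0.
have -> : n%:R^-1 / (1 - r) * (n_below r)%:R = (n_below r)%:R / n%:R / (1 - r).
  by field; rewrite !gt_eqF.
split; first by rewrite mulrC divfK ?gt_eqF.
by rewrite !ler_pdivrMr // mul1r mulrC.
Qed.

Lemma balanced_tie_free_demand {r} : balanced r -> n_at r = 0%N ->
  above_demand r = 1 /\ below_demand r = 1.
Proof.
move=> bal n_at0; have n_pos : 0 < n%:R :> R by rewrite ltr0n.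
have [[ra _] [rb _]] := (balanced_above_demand bal, balanced_below_demand bal).
have A_E := balanced_tie_free bal n_at0.
have [A_lt B_lt] := (balanced_n_above_lt bal, balanced_n_below_lt bal).
have := n_above_below_at r; rewrite n_at0 addn0 => ABn.
have /(balanced_gt0_of_above bal) r_gt0 : (0 < n_above r)%N by lia.
have /(balanced_lt1_of_below bal) r_lt1 : (0 < n_below r)%N by lia.
have B_E : (n_below r)%:R = n%:R * (1 - r).
  have : (n_above r)%:R + (n_below r)%:R = n%:R :> R by rewrite -natrD ABn.
  by rewrite A_E; lra.
rewrite A_E mulrAC divff ?mul1r ?gt_eqF // in ra.
rewrite B_E mulrAC divff ?mul1r ?gt_eqF // in rb.
have r'_gt0 : 0 < 1 - r by rewrite subr_gt0.
split; [apply: (mulfI (lt0r_neq0 r_gt0)) | apply: (mulfI (lt0r_neq0 r'_gt0))].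
  by rewrite ra mulr1.
by rewrite rb mulr1.
Qed.

Lemma balanced_tie_bundle {r} : balanced r -> (0 < n_at r)%N ->
  nonneg2 (tie_bundle r) /\ dot (r, 1 - r) (tie_bundle r) = n%:R^-1.
Proof.
move=> bal C_gt0; have n_pos : 0 < n%:R :> R by rewrite ltr0n.
have C_pos : 0 < (n_at r)%:R :> R by rewrite ltr0n.
have [[ra ad_le1] [rb bd_le1]] := (balanced_above_demand bal, balanced_below_demand bal).
split; first by split; apply: divr_ge0; rewrite ?subr_ge0 // ltW.
have -> : dot (r, 1 - r) (tie_bundle r) =
    (1 - r * above_demand r - (1 - r) * below_demand r) / (n_at r)%:R.
  by rewrite /dot /=; field; rewrite gt_eqF.
have ABC : (n_above r)%:R = n%:R - (n_below r)%:R - (n_at r)%:R :> R.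
  by rewrite -(n_above_below_at r) !natrD; ring.
by rewrite ra rb ABC; field; rewrite !gt_eqF.
Qed.

Lemma balanced_alloc_demand {r} i : balanced r ->
  is_demand (r, 1 - r) n%:R^-1 (p i) (balanced_alloc r i).
Proof.
move=> bal; have w_ge0 : 0 <= n%:R^-1 :> R by rewrite invr_ge0 ler0n.
rewrite /balanced_alloc /by_position; case: ltgtP => [r_lt | lt_r | tie].
- have A_gt0 : (0 < n_above r)%N by apply: (count_enum_gt0 _ i).
  exact: demand_all_state1 (balanced_gt0_of_above bal A_gt0) (ltW r_lt) w_ge0.
- have B_gt0 : (0 < n_below r)%N by apply: (count_enum_gt0 _ i).
  exact: demand_all_state2 (balanced_lt1_of_below bal B_gt0) (ltW lt_r) w_ge0.
- have C_gt0 : (0 < n_at r)%N by apply: (count_enum_gt0 _ i); rewrite /= tie.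
  have [tie_ge0 tie_cost] := balanced_tie_bundle bal C_gt0.
  by rewrite -tie; apply: demand_tie.
Qed.

Lemma balanced_alloc_clears {r} : balanced r ->
  \sum_(i < n) (balanced_alloc r i).1 = 1 /\ \sum_(i < n) (balanced_alloc r i).2 = 1.
Proof.
move=> bal; rewrite !sum_by_position !mul0rn addr0 add0r.
rewrite -/(above_demand r) -/(below_demand r).
have [C0 | C_gt0] := posnP (n_at r).
  have [-> ->] := balanced_tie_free_demand bal C0.
  by rewrite C0 !mulr0n !addr0.
have share_tie (a : R) : (a / (n_at r)%:R) *+ n_at r = a.
  have C_neq0 : (n_at r)%:R != 0 :> R by rewrite pnatr_eq0 -lt0n.
  by rewrite -[in RHS](divfK C_neq0 a) mulr_natr.
by rewrite /= !share_tie !(addrC (_ *+ _)) !subrK.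
Qed.

Lemma balanced_parimutuel_eq {r} : balanced r ->
  exists x, parimutuel_eq p (r, 1 - r) x.
Proof.
move=> bal; have [/andP[r_ge0 r_le1] _ _] := bal.
exists (balanced_alloc r); split.
  by split; rewrite /= ?subr_ge0 //; split=> //; ring.
split; [move=> i; exact: balanced_alloc_demand | exact: balanced_alloc_clears].
Qed.

Definition candidate (j : 'I_n + 'I_n.+1) : R :=
  match j with inl i => p i | inr k => k%:R / n%:R end.

Lemma candidate_01 j : 0 <= candidate j <= 1.
Proof.
case: j => [i | k] /=; first exact: p01.
have n_pos : 0 < n%:R :> R by rewrite ltr0n.
by rewrite divr_ge0 ?ler0n //= ler_pdivrMr // mul1r ler_nat -ltnS.
Qed.

Lemma n_above_gap {s r} : s < r -> (forall i, p i < r -> p i <= s) ->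
  n_above s = (n - n_below r)%N.
Proof.
move=> s_lt_r gap; rewrite -count_ord_predC; apply: eq_count => i /=.
have [/gap pi_le | r_le] := ltP (p i) r; first by rewrite ltNge pi_le.
exact: lt_le_trans r_le.
Qed.

Lemma exists_balanced : exists r, balanced r.
Proof.
(* Take the least feasible candidate r. If it violated the second inequality,
   the largest candidate s < r would have n_above s = n - n_below r, and the
   grid point (n - n_below r) / n < r would show s feasible. *)
have n_pos : 0 < n%:R :> R by rewrite ltr0n.
pose feasible j := (n_above (candidate j))%:R <= n%:R * candidate j.
have feasible_1 : feasible (inr ord_max).
  rewrite /feasible /= divff ?gt_eqF // mulr1.
  by rewrite n_above1 ler0n.
have [j0 feasible_j0 min_j0] := arg_minP candidate feasible_1.
set r := candidate j0; have /andP[r_ge0 r_le1] := candidate_01 j0.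
exists r; split => //; first by apply/andP.
rewrite leNgt; apply/negP => below_gt.
have r_gt0 : 0 < r.
  apply: gt0_of_below; rewrite lt0n; apply: contraTneq below_gt => ->.
  by rewrite -leNgt mulr_ge0 ?ler0n ?subr_ge0.
pose below_r j := candidate j < r.
have lt_r0 : below_r (inr ord0) by rewrite /below_r /= mul0r.
have [j1 s_lt_r max_j1] := arg_maxP candidate lt_r0.
rewrite /below_r in s_lt_r max_j1; set s := candidate j1 in s_lt_r max_j1.
have A_s : n_above s = (n - n_below r)%N.
  exact: n_above_gap s_lt_r (fun i => max_j1 (inl i)).
have k_lt : (n - n_below r < n.+1)%N by rewrite ltnS leq_subr.
have grid_lt : candidate (inr (Ordinal k_lt)) < r.
  by rewrite /= ltr_pdivrMr // natrB ?n_below_le //; lra.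
have grid_le : candidate (inr (Ordinal k_lt)) <= s := max_j1 _ grid_lt.
have feasible_j1 : feasible j1.
  by rewrite /feasible -/s A_s mulrC -ler_pdivrMr.
by have := min_j0 _ feasible_j1; rewrite -/r -/s; lra.
Qed.

End Parimutuel.

Theorem proposition4 (R : realFieldType) (n : nat) (p : 'I_n -> R) :
  (0 < n)%N ->
  (forall i, 0 <= p i <= 1) ->
  (exists (rho : R * R) (x : 'I_n -> R * R), parimutuel_eq p rho x) /\
  (forall (rho : R * R) (x : 'I_n -> R * R),
      parimutuel_eq p rho x -> is_med (med_list p) rho.1).
Proof.
move=> n_gt0 p01; split.
  have [r bal] := exists_balanced n_gt0 p01.
  have [x eq_x] := balanced_parimutuel_eq n_gt0 p01 bal.
  by exists (r, 1 - r), x.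
by move=> rho x /(parimutuel_eq_balanced n_gt0)/(balanced_is_med n_gt0 p01).
Qed.
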